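(* There exist a financial system $S$ with payment priorities and a bank $v$ such that: $S$ has exactly two solutions $r_1\neq r_2$, with $q_v(r_1)>0$ and $q_v(r_2)=0$; and for some system $S'$ obtained from $S$ by changing the priorities of (some of) the contracts whose debtor is $v$ (everything else unchanged), $S'$ has exactly one solution $r'$, which satisfies $r'=r_1$ and $q'_v(r')=q_v(r_1)$, where $q'_v$ is the payoff of $v$ in $S'$.
   Context: A financial system with payment priorities consists of: a finite set $V$ of banks; external assets $e_v\ge 0$ for each $v\in V$; a number $P\ge 1$ of priority levels; and a finite set of contracts, each of which is either a debt contract from a debtor $u$ to a creditor $v\neq u$ with weight $c>0$, or a credit default swap (CDS) from a debtor $u$ to a creditor $v\neq u$ in reference to a bank $w\notin\{u,v\}$ (the reference entity) with weight $c>0$. Every contract has a priority in $\{1,\dots,P\}$ (1 is the highest priority). It is assumed that every bank that is the reference entity of some CDS is the debtor of at least one debt contract of positive weight. Given a recovery rate vector $r\in[0,1]^V$: the liability of a contract $k$ is $l_k(r)=c$ if $k$ is a debt of weight $c$, and $l_k(r)=c\,(1-r_w)$ if $k$ is a CDS of weight $c$ in reference to $w$. For a bank $v$, $l_v(r)$ is the sum of the liabilities of the contracts with debtor $v$; $l_v^{(\rho)}(r)$ is the sum of the liabilities of contracts with debtor $v$ and priority $\rho$; and $l_v^{(\le\rho)}(r)=\sum_{i=1}^{\rho}l_v^{(i)}(r)$ (with $l_v^{(\le 0)}=0$). The payment on a contract $k$ with debtor $v$ and priority $\rho$ is $p_k(r)=l_k(r)\cdot\min\{1,\max\{0,(r_v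 l_v(r)-l_v^{(\le\rho-1)}(r))/l_v^{(\rho)}(r)\}\}$ (and $p_k(r)=0$ if $l_v^{(\rho)}(r)=0$). The assets of $v$ are $a_v(r)=e_v+\sum_k p_k(r)$, summing over contracts $k$ with creditor $v$. A vector $r\in[0,1]^V$ is a solution (clearing vector) if for every $v\in V$: $r_v=1$ when $a_v(r)\ge l_v(r)$, and $r_v=a_v(r)/l_v(r)$ when $a_v(r)<l_v(r)$. The payoff of $v$ is $q_v(r)=\max\{a_v(r)-l_v(r),0\}$. When $P=1$, payments reduce to $p_k(r)=r_v\,l_k(r)$ (principle of proportionality); this is called the base model. *)

From Stdlib Require Import Reals List Arith Bool.
Import ListNotations.
Open Scope R_scope.

(* Banks are the natural numbers 0, ..., nbanks-1. *)
Inductive ckind : Type :=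
| Debt : ckind
| CDS : nat -> ckind.   (* CDS in reference to the given bank *)

Record contract : Type := mkContract {
  kind : ckind;
  debtor : nat;
  creditor : nat;
  weight : R;
  prio : nat
}.

Record fsystem : Type := mkSystem {
  nbanks : nat;
  ext : nat -> R;
  nprio : nat;
  contracts : list contract
}.

Definition sumR (l : list R) : R := fold_right Rplus 0 l.

Definition contract_ok (S : fsystem) (k : contract) : Prop :=
  (debtor k < nbanks S)%nat /\ (creditor k < nbanks S)%nat /\
  debtor k <> creditor k /\ 0 < weight k /\
  (1 <= prio k <= nprio S)%nat /\
  match kind k with
  | Debt => True
  | CDS w => (w < nbanks S)%nat /\ w <> debtor k /\ w <> creditor k
  end.

Definition valid_system (S : fsystem) : Prop :=
  (forall v, (v < nbanks S)%nat -> 0 <= ext S v) /\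
  (1 <= nprio S)%nat /\
  (forall k, In k (contracts S) -> contract_ok S k) /\
  (forall k w, In k (contracts S) -> kind k = CDS w ->
     exists k', In k' (contracts S) /\ kind k' = Debt /\ debtor k' = w /\ 0 < weight k').

Definition liab (r : nat -> R) (k : contract) : R :=
  match kind k with
  | Debt => weight k
  | CDS w => weight k * (1 - r w)
  end.

Definition l_v (S : fsystem) (r : nat -> R) (v : nat) : R :=
  sumR (map (liab r) (filter (fun k => Nat.eqb (debtor k) v) (contracts S))).

Definition l_vp (S : fsystem) (r : nat -> R) (v rho : nat) : R :=
  sumR (map (liab r)
    (filter (fun k => andb (Nat.eqb (debtor k) v) (Nat.eqb (prio k) rho)) (contracts S))).

(* l_v^{(<= rho)} = sum_{i=1}^{rho} l_v^{(i)} ; equals 0 for rho = 0 *)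
Definition l_vle (S : fsystem) (r : nat -> R) (v rho : nat) : R :=
  sumR (map (l_vp S r v) (seq 1 rho)).

Definition payment (S : fsystem) (r : nat -> R) (k : contract) : R :=
  let v := debtor k in
  let rho := prio k in
  if Req_EM_T (l_vp S r v rho) 0 then 0
  else liab r k *
       Rmin 1 (Rmax 0 ((r v * l_v S r v - l_vle S r v (rho - 1)) / l_vp S r v rho)).

Definition assets (S : fsystem) (r : nat -> R) (v : nat) : R :=
  ext S v + sumR (map (payment S r)
                   (filter (fun k => Nat.eqb (creditor k) v) (contracts S))).

Definition is_solution (S : fsystem) (r : nat -> R) : Prop :=
  forall v, (v < nbanks S)%nat ->
    0 <= r v <= 1 /\
    (assets S r v >= l_v S r v -> r v = 1) /\
    (assets S r v < l_v S r v -> r v = assets S r v / l_v S r v).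

Definition payoff (S : fsystem) (r : nat -> R) (v : nat) : R :=
  Rmax (assets S r v - l_v S r v) 0.

(* equality of recovery vectors as elements of [0,1]^V *)
Definition same_vec (S : fsystem) (r1 r2 : nat -> R) : Prop :=
  forall v, (v < nbanks S)%nat -> r1 v = r2 v.

Definition reprioritized (S S' : fsystem) (v : nat) : Prop :=
  nbanks S' = nbanks S /\ ext S' = ext S /\ nprio S' = nprio S /\
  Forall2 (fun k k' => kind k' = kind k /\ debtor k' = debtor k /\
                       creditor k' = creditor k /\ weight k' = weight k /\
                       (prio k' = prio k \/ debtor k = v))
          (contracts S) (contracts S').

(* Bank 0 owes 1 to bank 1 and has sold protection (a CDS of weight 3) on bank 1 to bank 2;
   bank 1's only asset is what bank 0 pays it, and it owes 1 to bank 2.  Bank 0 holds 4/3.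
   With proportional payments bank 1 recovers exactly what bank 0 recovers, so r0 = r1 and
   r0 (4 - 3 r0) = min (4/3, 4 - 3 r0): besides r0 = 1 this has the double root r0 = 2/3,
   a self-fulfilling default in which bank 0 is wiped out.  Paying the debt before the CDS
   makes bank 1 whole in every scenario (1 <= 4/3), hence the CDS is worthless and only the
   solvent solution survives. *)
From Stdlib Require Import Reals List Arith.
From Stdlib Require Import Lra Psatz.
Import ListNotations.
Open Scope R_scope.

(* [is_solution S r] says exactly [clears (r v) (assets S r v) (l_v S r v)] at every bank [v]. *)
Definition clears (x a l : R) : Prop :=
  0 <= x <= 1 /\ (a >= l -> x = 1) /\ (a < l -> x = a / l).

Lemma clears_iff x a l : 0 <= a -> 0 < l -> clears x a l <-> x * l = Rmin a l.
Proof.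
  intros Ha Hl; unfold clears, Rmin; split.
  - intros [Hx [Hge Hlt]]; destruct Rle_dec as [Hal|Hal].
    + destruct (Rlt_le_dec a l) as [Hlt'|Hge'].
      * rewrite (Hlt Hlt'); field; lra.
      * rewrite (Hge ltac:(lra)); lra.
    + rewrite (Hge ltac:(lra)); lra.
  - destruct Rle_dec as [Hal|Hal]; intros Hx.
    + assert (E : x = a / l) by (apply (Rmult_eq_reg_r l); [rewrite Hx; field|]; lra).
      assert (0 <= x <= 1) by (split; nra).
      repeat split; try lra; intros; nra.
    + assert (x = 1) by nra; repeat split; lra.
Qed.

Lemma clears_no_liabilities x a : 0 <= a -> clears x a 0 -> x = 1.
Proof. intros Ha [_ [Hge _]]; apply Hge; lra. Qed.

Lemma clamp_bounds x : 0 <= Rmin 1 (Rmax 0 x) <= 1.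
Proof. unfold Rmin, Rmax; repeat destruct Rle_dec; lra. Qed.

Lemma clamp_id x : 0 <= x <= 1 -> Rmin 1 (Rmax 0 x) = x.
Proof. intros; unfold Rmin, Rmax; repeat destruct Rle_dec; lra. Qed.

Lemma clamp_one x : 1 <= x -> Rmin 1 (Rmax 0 x) = 1.
Proof. intros; unfold Rmin, Rmax; repeat destruct Rle_dec; lra. Qed.

Lemma sumR_nonneg (l : list R) : Forall (Rle 0) l -> 0 <= sumR l.
Proof. induction 1; simpl; lra. Qed.

Section Assets.

Variables (S : fsystem) (r : nat -> R).
Hypothesis r_unit : forall w, (w < nbanks S)%nat -> 0 <= r w <= 1.

Lemma liab_nonneg k : contract_ok S k -> 0 <= liab r k.
Proof.
  intros (_ & _ & _ & Hw & _ & Hkind); unfold liab.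
  destruct (kind k) as [|w]; [lra|].
  destruct Hkind as [Hw' _]; specialize (r_unit w Hw'); nra.
Qed.

Lemma payment_nonneg k : contract_ok S k -> 0 <= payment S r k.
Proof.
  intros Hk; unfold payment; destruct Req_EM_T; [lra|].
  apply Rmult_le_pos; [exact (liab_nonneg k Hk)|apply clamp_bounds].
Qed.

Lemma assets_nonneg v : valid_system S -> (v < nbanks S)%nat -> 0 <= assets S r v.
Proof.
  intros (Hext & _ & Hok & _) Hv; unfold assets.
  apply Rplus_le_le_0_compat; [exact (Hext v Hv)|].
  apply sumR_nonneg, Forall_forall; intros p Hp.
  apply in_map_iff in Hp as (k & <- & Hk); apply filter_In in Hk as [Hk _].
  exact (payment_nonneg k (Hok k Hk)).
Qed.

End Assets.

Lemma solution_no_liabilities S r v :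
  valid_system S -> is_solution S r -> (v < nbanks S)%nat -> l_v S r v = 0 -> r v = 1.
Proof.
  intros HS H Hv Hl; apply (clears_no_liabilities (r v) (assets S r v)).
  - exact (assets_nonneg S r (fun w Hw => proj1 (H w Hw)) v HS Hv).
  - rewrite <- Hl; exact (H v Hv).
Qed.

Lemma payment_proportional S r k :
  (forall k', In k' (contracts S) -> prio k' = 1%nat) -> In k (contracts S) ->
  0 <= r (debtor k) <= 1 -> l_v S r (debtor k) <> 0 ->
  payment S r k = r (debtor k) * liab r k.
Proof.
  intros Hprio Hk Hr Hl.
  assert (Hvp : l_vp S r (debtor k) (prio k) = l_v S r (debtor k)).
  { unfold l_vp, l_v; do 2 f_equal; apply filter_ext_in; intros k' Hk'.
    rewrite (Hprio k Hk), (Hprio k' Hk'), Nat.eqb_refl, Bool.andb_true_r; reflexivity. }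
  unfold payment; rewrite Hvp, (Hprio k Hk).
  destruct Req_EM_T as [E|_]; [contradiction|].
  change (l_vle S r (debtor k) (1 - 1)) with 0.
  rewrite clamp_id; [field; exact Hl|].
  replace ((r (debtor k) * l_v S r (debtor k) - 0) / l_v S r (debtor k)) with (r (debtor k))
    by (field; exact Hl); exact Hr.
Qed.

(* [example p] gives the CDS priority [p]: [example 1] is [S] and [example 2] is [S']. *)
Definition example (p : nat) : fsystem :=
  mkSystem 3 (fun i => match i with 0%nat => 4/3 | _ => 0 end) 2
    [mkContract Debt 0 1 1 1; mkContract (CDS 1) 0 2 3 p; mkContract Debt 1 2 1 1].

Definition r_solvent : nat -> R := fun _ => 1.

Definition r_default : nat -> R := fun i => match i with 0%nat | 1%nat => 2/3 | _ => 1 end.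

Lemma lt3_cases v : (v < 3)%nat -> v = 0%nat \/ v = 1%nat \/ v = 2%nat.
Proof. lia. Qed.

Lemma example_valid p : (1 <= p <= 2)%nat -> valid_system (example p).
Proof.
  intros Hp; split; [|split; [|split]].
  - intros v Hv; destruct (lt3_cases v Hv) as [-> | [-> | ->]]; simpl; lra.
  - simpl; lia.
  - intros k Hk; destruct Hk as [<- | [<- | [<- | []]]];
      unfold contract_ok; simpl; repeat split; try lia; lra.
  - intros k w Hk Hw; destruct Hk as [<- | [<- | [<- | []]]]; simpl in Hw; try discriminate.
    injection Hw as <-; exists (mkContract Debt 1 2 1 1); simpl; repeat split; auto; lra.
Qed.

Lemma example_reprioritized : reprioritized (example 1) (example 2) 0.
Proof.
  unfold reprioritized; simpl; repeat split; auto.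
  repeat (constructor; [simpl; repeat split; auto|]); constructor.
Qed.

Lemma example_liab0 p r : l_v (example p) r 0 = 4 - 3 * r 1%nat.
Proof. unfold l_v, liab; simpl; ring. Qed.

Lemma example_liab1 p r : l_v (example p) r 1 = 1.
Proof. unfold l_v, liab; simpl; ring. Qed.

Lemma example_liab2 p r : l_v (example p) r 2 = 0.
Proof. reflexivity. Qed.

Lemma example_assets0 p r : assets (example p) r 0 = 4/3.
Proof. unfold assets; simpl; ring. Qed.

Lemma example_payoff0 p r : payoff (example p) r 0 = Rmax (3 * r 1%nat - 8/3) 0.
Proof. unfold payoff; rewrite example_assets0, example_liab0; f_equal; lra. Qed.

Lemma example_assets1_proportional r :
  0 <= r 0%nat <= 1 -> r 1%nat <= 1 -> assets (example 1) r 1 = r 0%nat.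
Proof.
  intros Hr0 Hr1; unfold assets; cbn -[payment].
  rewrite payment_proportional; [unfold liab; simpl; ring| | |exact Hr0|].
  - intros k [<- | [<- | [<- | []]]]; reflexivity.
  - left; reflexivity.
  - change (l_v (example 1) r 0 <> 0); rewrite example_liab0; lra.
Qed.

(* Bank 1 is paid first, so it receives what bank 0 pays out, capped at its claim. *)
Lemma example_assets1_prioritized r :
  assets (example 2) r 1 = Rmin 1 (Rmax 0 (r 0%nat * (4 - 3 * r 1%nat))).
Proof.
  unfold assets, payment, l_vp, l_v, l_vle, liab; simpl.
  destruct Req_EM_T; [lra|].
  replace ((r 0%nat * (1 + (3 * (1 - r 1%nat) + 0)) - 0) / (1 + 0))
    with (r 0%nat * (4 - 3 * r 1%nat)) by field; ring.
Qed.

Lemma example_solution p r :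
  (1 <= p <= 2)%nat -> (forall w, 0 <= r w <= 1) -> r 2%nat = 1 ->
  clears (r 0%nat) (4/3) (4 - 3 * r 1%nat) -> clears (r 1%nat) (assets (example p) r 1) 1 ->
  is_solution (example p) r.
Proof.
  intros Hp Hr Hr2 H0 H1 v Hv; destruct (lt3_cases v Hv) as [-> | [-> | ->]].
  - rewrite example_assets0, example_liab0; exact H0.
  - rewrite example_liab1; exact H1.
  - rewrite example_liab2, Hr2; repeat split; try lra; intros Hneg.
    pose proof (assets_nonneg (example p) r (fun w _ => Hr w) 2 (example_valid p Hp)
      ltac:(simpl; lia)); lra.
Qed.

Lemma r_solvent_solution p : (1 <= p <= 2)%nat -> is_solution (example p) r_solvent.
Proof.
  intros Hp; apply example_solution; unfold r_solvent; auto; try (intros; lra).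
  - apply clears_iff; try lra; rewrite Rmin_right; lra.
  - destruct (Nat.eq_dec p 1) as [->|Hp2].
    + rewrite example_assets1_proportional; repeat split; lra.
    + replace p with 2%nat by lia; rewrite example_assets1_prioritized, clamp_one; try lra.
      repeat split; lra.
Qed.

Lemma r_default_solution : is_solution (example 1) r_default.
Proof.
  apply example_solution; unfold r_default; auto; try (intros [|[|]]; lra).
  - apply clears_iff; try lra; rewrite Rmin_left; lra.
  - rewrite example_assets1_proportional; try lra.
    apply clears_iff; try lra; rewrite Rmin_left; lra.
Qed.

Lemma example1_solutions r :
  is_solution (example 1) r -> same_vec (example 1) r r_solvent \/ same_vec (example 1) r r_default.
Proof.
  intros H.
  pose proof (proj1 (H 0%nat ltac:(simpl; lia))) as U0.
  pose proof (proj1 (H 1%nat ltac:(simpl; lia))) as U1.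
  assert (E2 : r 2%nat = 1)
    by exact (solution_no_liabilities _ _ 2 (example_valid 1 ltac:(lia)) H ltac:(simpl; lia)
                (example_liab2 1 r)).
  assert (E1 : r 1%nat = r 0%nat).
  { pose proof (H 1%nat ltac:(simpl; lia)) as H1.
    rewrite example_assets1_proportional, example_liab1 in H1 by lra.
    apply clears_iff in H1; [|lra|lra]; rewrite Rmin_left in H1; lra. }
  pose proof (H 0%nat ltac:(simpl; lia)) as H0.
  rewrite example_assets0, example_liab0, E1 in H0.
  apply clears_iff in H0; [|lra|lra].
  unfold same_vec, r_solvent, r_default; simpl.
  destruct (Rle_lt_dec (4 - 3 * r 0%nat) (4/3)).
  - rewrite Rmin_right in H0 by lra.
    assert (r 0%nat = 1) by nra.
    left; intros v Hv; destruct (lt3_cases v Hv) as [-> | [-> | ->]]; lra.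
  - (* 3 r0^2 - 4 r0 + 4/3 = (3 r0 - 2)^2 / 3 *)
    rewrite Rmin_left in H0 by lra.
    assert (r 0%nat = 2/3) by nra.
    right; intros v Hv; destruct (lt3_cases v Hv) as [-> | [-> | ->]]; lra.
Qed.

Lemma example2_unique_solution r : is_solution (example 2) r -> same_vec (example 2) r r_solvent.
Proof.
  intros H.
  pose proof (proj1 (H 1%nat ltac:(simpl; lia))) as U1.
  assert (E2 : r 2%nat = 1)
    by exact (solution_no_liabilities _ _ 2 (example_valid 2 ltac:(lia)) H ltac:(simpl; lia)
                (example_liab2 2 r)).
  pose proof (H 0%nat ltac:(simpl; lia)) as H0.
  rewrite example_assets0, example_liab0 in H0.
  apply clears_iff in H0; [|lra|lra].
  assert (Paid : 1 <= r 0%nat * (4 - 3 * r 1%nat))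
    by (rewrite H0; unfold Rmin; destruct Rle_dec; lra).
  pose proof (H 1%nat ltac:(simpl; lia)) as H1.
  rewrite example_assets1_prioritized, clamp_one, example_liab1 in H1 by exact Paid.
  assert (E1 : r 1%nat = 1) by (apply H1; lra).
  rewrite E1, Rmin_right in H0 by lra.
  unfold same_vec, r_solvent; simpl.
  intros v Hv; destruct (lt3_cases v Hv) as [-> | [-> | ->]]; lra.
Qed.

Theorem mainTheorem9 :
  exists (S : fsystem) (v : nat),
    valid_system S /\ (v < nbanks S)%nat /\
    exists r1 r2 : nat -> R,
      is_solution S r1 /\ is_solution S r2 /\ ~ same_vec S r1 r2 /\
      (forall r, is_solution S r -> same_vec S r r1 \/ same_vec S r r2) /\
      payoff S r1 v > 0 /\ payoff S r2 v = 0 /\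
      exists S' : fsystem,
        reprioritized S S' v /\ valid_system S' /\
        exists r' : nat -> R,
          is_solution S' r' /\
          (forall r, is_solution S' r -> same_vec S' r r') /\
          same_vec S r' r1 /\
          payoff S' r' v = payoff S r1 v.
Proof.
  exists (example 1), 0%nat.
  split; [apply example_valid; lia|]; split; [simpl; lia|].
  exists r_solvent, r_default.
  split; [apply r_solvent_solution; lia|]; split; [exact r_default_solution|].
  split; [intros Hs; specialize (Hs 0%nat ltac:(simpl; lia)); unfold r_solvent, r_default in Hs; lra|].
  split; [exact example1_solutions|].
  rewrite !example_payoff0; unfold r_solvent, r_default, Rmax.
  split; [destruct Rle_dec; lra|]; split; [destruct Rle_dec; lra|].
  exists (example 2); split; [exact example_reprioritized|]; split; [apply example_valid; lia|].
  exists r_solvent; split; [apply r_solvent_solution; lia|].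
  split; [exact example2_unique_solution|].
  split; [intros v _; reflexivity|].
  rewrite example_payoff0; reflexivity.
Qed.
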